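(* Let $x_1,x_2,x_3>0$, $\gamma,\delta>0$ with $\gamma\ne1\ne\delta$, and let $$\mathbf{Q}=\begin{pmatrix}1&\delta x_1&x_2&x_3\\ 1/(\delta x_1)&1&x_2/x_1&x_3/x_1\\ 1/x_2&x_1/x_2&1&\gamma x_3/x_2\\ 1/x_3&x_1/x_3&x_2/(\gamma x_3)&1\end{pmatrix}$$ with principal right eigenvector $\mathbf{w}^{EM}$. If $\delta,\gamma<1$, then $w_2^{EM}/w_3^{EM}>x_2/x_1$.
   Context: The principal right eigenvector is the positive (Perron) eigenvector belonging to the largest eigenvalue. *)

From HB Require Import structures.
From mathcomp Require Import all_boot all_order all_algebra.
From mathcomp Require Import reals.
Set Implicit Arguments. Unset Strict Implicit. Unset Printing Implicit Defensive.
Import Order.TTheory GRing.Theory Num.Theory.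
Local Open Scope ring_scope.

(* Entries of the 4x4 matrix Q, indexed from 0 (paper index minus one). *)
Definition Q_entry (R : fieldType) (x1 x2 x3 g d : R) (i j : nat) : R :=
  match i%N, j%N with
  | 0%N, 0%N => 1 | 0, 1 => d * x1 | 0, 2 => x2 | 0, 3 => x3
  | 1, 0 => (d * x1)^-1 | 1, 1 => 1 | 1, 2 => x2 / x1 | 1, 3 => x3 / x1
  | 2, 0 => x2^-1 | 2, 1 => x1 / x2 | 2, 2 => 1 | 2, 3 => g * x3 / x2
  | 3, 0 => x3^-1 | 3, 1 => x1 / x3 | 3, 2 => x2 / (g * x3) | _, _ => 1
  end.

Definition Qmx (R : fieldType) (x1 x2 x3 g d : R) : 'M[R]_4 :=
  \matrix_(i < 4, j < 4) Q_entry x1 x2 x3 g d i j.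

Definition principal_right_eigenvector (R : realFieldType) (n : nat)
  (A : 'M[R]_n) (w : 'cV[R]_n) : Prop :=
  (forall i, 0 < w i 0) /\
  exists lambda : R,
    A *m w = lambda *: w /\ (forall mu : R, eigenvalue A mu -> mu <= lambda).

(** Any eigenvector of Q with positive entries will do.  Its eigenvalue [lambda] is positive because Q is
    a positive matrix.  Scaling the second and third eigen-equations by [x1]
    and [x2] makes all their terms agree except [w1 / d] against [w1] and
    [x3 w4] against [g x3 w4], hence
    [lambda (x1 w2 - x2 w3) = (1/d - 1) w1 + (1 - g) x3 w4 > 0]
    when [d, g < 1]. *)
From mathcomp Require Import all_boot all_order all_algebra.
From mathcomp Require Import reals.
From mathcomp Require Import ring.
Set Implicit Arguments. Unset Strict Implicit. Unset Printing Implicit Defensive.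
Import Order.TTheory GRing.Theory Num.Theory.
Local Open Scope ring_scope.

Lemma eigenvalue_gt0_of_pos (R : realFieldType) (n : nat)
    (A : 'M[R]_n.+1) (w : 'cV[R]_n.+1) (l : R) :
  (forall i j, 0 < A i j) -> (forall i, 0 < w i 0) ->
  A *m w = l *: w -> 0 < l.
Proof.
move=> Apos wpos Ew.
have Aw0 : 0 < (A *m w) 0 0.
  rewrite mxE (bigD1 ord0) //= ltr_pwDl ?mulr_gt0 //.
  by apply: sumr_ge0 => j _; rewrite mulr_ge0 ?ltW.
by move: Aw0; rewrite Ew mxE pmulr_lgt0.
Qed.

Lemma big_ord4 (V : nmodType) (F : 'I_4 -> V) :
  \sum_(j < 4) F j = F (inord 0) + F (inord 1) + F (inord 2) + F (inord 3).
Proof.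
rewrite !big_ord_recl big_ord0 addr0 !addrA.
have ordE (k : 'I_4) (m : nat) : val k = m -> k = inord m.
  by move=> km; apply/val_inj; rewrite /= inordK -km ?ltn_ord.
by congr (_ + _ + _ + _); congr F; apply: ordE.
Qed.

Section QMatrix.

Variables (R : realFieldType) (x1 x2 x3 g d : R).
Hypotheses (x1_gt0 : 0 < x1) (x2_gt0 : 0 < x2) (x3_gt0 : 0 < x3).
Hypotheses (g_gt0 : 0 < g) (d_gt0 : 0 < d).

Let Q := Qmx x1 x2 x3 g d.

Lemma Qmx_gt0 i j : 0 < Q i j.
Proof.
rewrite mxE; case: i j => [[|[|[|[|//]]]] _] [[|[|[|[|//]]]] _] /=;
  by rewrite ?(mulr_gt0, divr_gt0, invr_gt0).
Qed.

Lemma Qmx_mulmx_entry (w : 'cV[R]_4) (i : nat) : (i < 4)%N ->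
  (Q *m w) (inord i) 0 =
  Q_entry x1 x2 x3 g d i 0 * w (inord 0) 0 + Q_entry x1 x2 x3 g d i 1 * w (inord 1) 0 +
  Q_entry x1 x2 x3 g d i 2 * w (inord 2) 0 + Q_entry x1 x2 x3 g d i 3 * w (inord 3) 0.
Proof. by move=> lt_i4; rewrite mxE big_ord4 !mxE !inordK. Qed.

Lemma Qmx_eigen_rows12 (w : 'cV[R]_4) (l : R) : Q *m w = l *: w ->
  l * (x1 * w (inord 1) 0 - x2 * w (inord 2) 0) =
  (d^-1 - 1) * w (inord 0) 0 + (1 - g) * (x3 * w (inord 3) 0).
Proof.
move=> Ew.
have row1 := Qmx_mulmx_entry w (isT : (1 < 4)%N).
have row2 := Qmx_mulmx_entry w (isT : (2 < 4)%N).
rewrite Ew mxE /Q_entry /= in row1.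
rewrite Ew mxE /Q_entry /= in row2.
rewrite mulrBr [l * (x1 * _)]mulrCA [l * (x2 * _)]mulrCA row1 row2.
by field; rewrite !gt_eqF.
Qed.

End QMatrix.

Theorem mainTheorem14 (R : realType) (x1 x2 x3 g d : R) (w : 'cV[R]_4) :
  0 < x1 -> 0 < x2 -> 0 < x3 -> 0 < g -> 0 < d -> g != 1 -> d != 1 ->
  principal_right_eigenvector (Qmx x1 x2 x3 g d) w ->
  d < 1 -> g < 1 ->
  x2 / x1 < w (inord 1) 0 / w (inord 2) 0.
Proof.
move=> x1_gt0 x2_gt0 x3_gt0 g_gt0 d_gt0 _ _ [wpos [l [Ew _]]] d_lt1 g_lt1.
have l_gt0 : 0 < l := eigenvalue_gt0_of_pos (Qmx_gt0 x1_gt0 x2_gt0 x3_gt0 g_gt0 d_gt0) wpos Ew.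
have rhs_gt0 : 0 < (d^-1 - 1) * w (inord 0) 0 + (1 - g) * (x3 * w (inord 3) 0).
  rewrite ltr_pwDl ?mulr_gt0 ?subr_gt0 ?invf_gt1 //.
  by rewrite mulr_ge0 ?subr_ge0 ?ltW ?mulr_gt0.
have : 0 < x1 * w (inord 1) 0 - x2 * w (inord 2) 0.
  by move: rhs_gt0; rewrite -(Qmx_eigen_rows12 x1_gt0 x2_gt0 d_gt0 Ew) pmulr_rgt0.
rewrite subr_gt0 ltr_pdivlMr // mulrAC ltr_pdivrMr //.
by rewrite [_ * x1]mulrC.
Qed.
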